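(* Let $M$ be a duplicial module in a pre-additive category. For all $n\ge0$, $$\pi_n=(1-b_{n+1}d_n)^{n+1}(1-d_{n-1}b_n)^n .$$
   Context: Let $\mathcal A$ be a pre-additive category. Let $\Lambda_+$ be the category with objects $[n]$, $n\ge0$, where $\Lambda_+([m],[n])$ is the set of weakly monotone $f:\mathbb Z\to\mathbb Z$ with $f(j+m+1)=f(j)+n+1$ for all $j$ and $f(0)\ge0$. Define $\varepsilon^n_i:[n-1]\to[n]$ ($n\ge1$, $0\le i\le n$) by $\varepsilon^n_i(j)=j$ for $0\le j<i$, $j+1$ for $i\le j\le n-1$, and $\eta^n_i:[n+1]\to[n]$ ($0\le i\le n+1$) by $\eta^n_i(j)=j$ for $0\le j\le i$, $j-1$ for $i<j\le n+1$. A duplicial module is a functor $M:\Lambda_+^{op}\to\mathcal A$; $M_n=M([n])$, $\partial_{n,i}=M(\varepsilon^n_i):M_n\to M_{n-1}$, $s_{n,i}=M(\eta^n_i):M_n\to M_{n+1}$. Convention $M_{-1}=0$, maps into/out of it zero. Define $b_n=\sum_{i=0}^n(-1)^i\partial_{n,i}$ ($b_0=0$), $d_n=\sum_{i=0}^{n+1}(-1)^is_{n,i}$ ($d_{-1}=0$), the Karoubi operator $\kappa_n=(-1)^n(\partial_{n+1,0}s_{n,n+1}-s_{n-1,n}\partial_{n,0})$ (so $\kappa_0=\partial_{1,0}s_{0,1}$), and the Dwyer–Kan operator $\pi_n=(-1)^n\partial_{n+1,0}\kappa_{n+1}^n s_{n,n+1}$. *)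

From HB Require Import structures.
From mathcomp Require Import all_boot all_order all_algebra.
Set Implicit Arguments. Unset Strict Implicit. Unset Printing Implicit Defensive.
Import Order.TTheory GRing.Theory Num.Theory.
Local Open Scope ring_scope.

(** Pre-additive category: hom-sets are abelian groups (zmodType) and
    composition is bilinear. [hcomp g f] is g ∘ f. *)
Record PreAdditive := {
  Obj : Type;
  Hom : Obj -> Obj -> zmodType;
  idm : forall X, Hom X X;
  hcomp : forall X Y Z, Hom Y Z -> Hom X Y -> Hom X Z;
  hcompA : forall X Y Z W (h : Hom Z W) (g : Hom Y Z) (f : Hom X Y),
      hcomp h (hcomp g f) = hcomp (hcomp h g) f;
  hcomp1m : forall X Y (f : Hom X Y), hcomp (idm Y) f = f;
  hcompm1 : forall X Y (f : Hom X Y), hcomp f (idm X) = f;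
  hcompDl : forall X Y Z (g1 g2 : Hom Y Z) (f : Hom X Y),
      hcomp (g1 + g2) f = hcomp g1 f + hcomp g2 f;
  hcompDr : forall X Y Z (g : Hom Y Z) (f1 f2 : Hom X Y),
      hcomp g (f1 + f2) = hcomp g f1 + hcomp g f2
}.
Arguments Hom : clear implicits.
Arguments Obj : clear implicits.
Arguments idm {_}.
Arguments hcomp {_ X Y Z}.

(** Morphisms [m] -> [n] of Lambda_+ : weakly monotone f : Z -> Z with
    f(j+m+1) = f(j)+n+1 and f(0) >= 0. *)
Definition isLam (m n : nat) (f : int -> int) : Prop :=
  (forall x y : int, x <= y -> f x <= f y) /\
  (forall j : int, f (j + (m.+1)%:Z) = f j + (n.+1)%:Z) /\
  0 <= f 0.

(** A duplicial module: a functor Lambda_+^op -> A, given by objects M n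
    and, for each morphism f : [m] -> [n] of Lambda_+, a map M n -> M m,
    respecting identities and composition. *)
Record Duplicial (A : PreAdditive) := {
  Mob : nat -> Obj A;
  Mmor : forall m n : nat, (int -> int) -> Hom A (Mob n) (Mob m);
  Mmor_id : forall n, Mmor n n id = idm (Mob n);
  Mmor_comp : forall m n p (f g : int -> int), isLam m n f -> isLam n p g ->
      Mmor m p (g \o f) = hcomp (Mmor m n f) (Mmor n p g)
}.

(** ε^n_i : [n-1] -> [n] (n >= 1), extended periodically to Z. *)
Definition eps (n : nat) (i : nat) (j : int) : int :=
  let q := (j %/ n%:Z)%Z in let r := (j %% n%:Z)%Z in
  q * (n.+1)%:Z + (if r < i%:Z then r else r + 1).

(** η^n_i : [n+1] -> [n], extended periodically to Z. *)
Definition eta (n : nat) (i : nat) (j : int) : int :=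
  let q := (j %/ (n.+2)%:Z)%Z in let r := (j %% (n.+2)%:Z)%Z in
  q * (n.+1)%:Z + (if r <= i%:Z then r else r - 1).

Section Ops.
Variables (A : PreAdditive) (M : Duplicial A).
Local Notation MM := (Mob M).

Definition sgn (V : zmodType) (k : nat) (x : V) : V := if odd k then - x else x.

(** del k i = ∂_{k+1,i} : M_{k+1} -> M_k *)
Definition del (k i : nat) : Hom A (MM k.+1) (MM k) := Mmor M k k.+1 (eps k.+1 i).
Definition sdeg (n i : nat) : Hom A (MM n) (MM n.+1) := Mmor M n.+1 n (eta n i).

(** bb k = b_{k+1} *)
Definition bb (k : nat) : Hom A (MM k.+1) (MM k) :=
  \sum_(i < k.+2) sgn i (del k i).
Definition dd (n : nat) : Hom A (MM n) (MM n.+1) :=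
  \sum_(i < n.+2) sgn i (sdeg n i).

(** Karoubi operator κ_n (with the convention M_{-1} = 0). *)
Definition kappa (n : nat) : Hom A (MM n) (MM n) :=
  sgn n (hcomp (del n 0) (sdeg n n.+1) -
         match n return Hom A (MM n) (MM n) with
         | 0 => 0
         | k.+1 => hcomp (sdeg k k.+1) (del k 0)
         end).

Definition hpow (X : Obj A) (f : Hom A X X) (k : nat) : Hom A X X :=
  iter k (hcomp f) (idm X).

Definition piDK (n : nat) : Hom A (MM n) (MM n) :=
  sgn n (hcomp (del n 0) (hcomp (hpow (kappa n.+1) n) (sdeg n n.+1))).

Definition bd (n : nat) : Hom A (MM n) (MM n) := hcomp (bb n) (dd n).
Definition db (n : nat) : Hom A (MM n) (MM n) :=
  match n return Hom A (MM n) (MM n) with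
  | 0 => 0
  | k.+1 => hcomp (dd k) (bb k)
  end.
End Ops.

From Pilot Require Import Defs.
From HB Require Import structures.
From mathcomp Require Import all_boot all_order all_algebra.
From mathcomp Require Import zify.
From Stdlib Require FunctionalExtensionality.
(* Re-import, so that [eta] means [Defs.eta] and not [HB.structures.eta]. *)
Import Pilot.Defs.
Set Implicit Arguments. Unset Strict Implicit. Unset Printing Implicit Defensive.
Import Order.TTheory GRing.Theory Num.Theory.
Local Open Scope ring_scope.

(* The simplicial identities give [∂_0 κ^n = κ^n (∂_0 - ∂_1 + ... ± ∂_n)] and
   [κ_n^n s_i = 0] for [i < n]; since [d_n = s_0 - ... ± s_n ∓ s_{n+1}] and
   [b s' = -s' b] for the truncated sum [s'], this yields [π_n = κ_n^n (1 - b d)].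
   Moreover [κ = 1 - b d - d b], and [b b = d d = 0] make [b d] and [d b]
   annihilate each other, so [κ = (1 - b d)(1 - d b)] with commuting factors.
   The identities themselves are checked on the explicit maps [eps] and [eta]
   of [Lambda_+], which are determined by their values on one period. *)

Lemma divz_modz_unique (x q r d : int) : 0 <= r < d -> x = q * d + r ->
  (x %/ d)%Z = q /\ (x %% d)%Z = r.
Proof.
move=> /andP[r_ge0 r_lt] ->; have d_neq0 : d != 0 by lia.
have -> : ((q * d + r) %/ d)%Z = q by rewrite divzMDl // divz_small ?addr0 //; lia.
by rewrite modzMDl modz_small //; lia.
Qed.

Lemma modz_bound (x : int) (m : nat) : 0 <= (x %% m.+1%:Z)%Z <= m%:Z.
Proof. by rewrite modz_ge0 //=; have := @ltz_pmod x m.+1%:Z isT; lia. Qed.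

(* [eps n i] and [eta n i] unfold to instances of [periodic_ext]. *)
Definition periodic_ext (p c : nat) (g : int -> int) (x : int) : int :=
  (x %/ p%:Z)%Z * c%:Z + g (x %% p%:Z)%Z.

Lemma periodic_ext_small p c g x : 0 <= x < p%:Z -> periodic_ext p c g x = g x.
Proof.
move=> x_range; rewrite /periodic_ext.
by have [-> ->] := divz_modz_unique (q := 0) x_range (esym (add0r x)); rewrite mul0r add0r.
Qed.

Lemma periodic_ext_next p c g x : p%:Z <= x < p%:Z + p%:Z ->
  periodic_ext p c g x = g (x - p%:Z) + c%:Z.
Proof.
move=> x_range; rewrite /periodic_ext.
have [-> ->] := @divz_modz_unique x 1 (x - p%:Z) p%:Z ltac:(lia) ltac:(lia).
by rewrite mul1r addrC.
Qed.

Lemma periodic_ext_isLam m n g :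
  (forall r, 0 <= r <= m%:Z -> 0 <= g r <= n.+1%:Z) ->
  (forall r s, 0 <= r -> r <= s -> s <= m%:Z -> g r <= g s) ->
  isLam m n (periodic_ext m.+1 n.+1 g).
Proof.
move=> g_bound g_mono; split; [|split].
- move=> x y le_xy; rewrite /periodic_ext.
  have := divz_eq x m.+1%:Z; have := divz_eq y m.+1%:Z.
  have := modz_bound x m; have := modz_bound y m.
  set qx := (x %/ _)%Z; set qy := (y %/ _)%Z; set rx := (x %% _)%Z; set ry := (y %% _)%Z.
  move=> ry_range rx_range y_eq x_eq.
  have [gx_ge0 gx_le] := andP (g_bound _ rx_range).
  have [gy_ge0 gy_le] := andP (g_bound _ ry_range).
  have [lt_q|ge_q] := ltP qx qy.
    have : (qx + 1) * n.+1%:Z <= qy * n.+1%:Z by rewrite ler_wpM2r //; lia.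
    lia.
  have [lt_q'|ge_q'] := ltP qy qx.
    have : (qy + 1) * m.+1%:Z <= qx * m.+1%:Z by rewrite ler_wpM2r //; lia.
    lia.
  have eq_q : qx = qy by lia.
  have : g rx <= g ry by apply: g_mono; lia.
  by rewrite eq_q; lia.
- move=> j; rewrite /periodic_ext.
  have [-> ->] : ((j + m.+1%:Z) %/ m.+1%:Z)%Z = (j %/ m.+1%:Z)%Z + 1 /\
                 ((j + m.+1%:Z) %% m.+1%:Z)%Z = (j %% m.+1%:Z)%Z.
    by apply: divz_modz_unique; have := modz_bound j m; have := divz_eq j m.+1%:Z; lia.
  lia.
- by rewrite periodic_ext_small //; have /andP[] := g_bound 0 isT.
Qed.

Lemma eps_isLam k i : isLam k k.+1 (eps k.+1 i).
Proof.
apply: (@periodic_ext_isLam _ _ (fun r => if r < i%:Z then r else r + 1)) => [r|r s].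
  by case: ifPn => ?; lia.
by do 2 case: ifPn => ?; lia.
Qed.

Lemma eta_isLam n i : isLam n.+1 n (eta n i).
Proof.
apply: (@periodic_ext_isLam _ _ (fun r => if r <= i%:Z then r else r - 1)) => [r|r s].
  by case: ifPn => ?; lia.
by do 2 case: ifPn => ?; lia.
Qed.

Lemma isLam_comp m n p f g : isLam m n f -> isLam n p g -> isLam m p (g \o f).
Proof.
move=> [f_mono [f_per f0]] [g_mono [g_per g0]]; split; [|split] => /=.
- by move=> x y /f_mono /g_mono.
- by move=> j; rewrite f_per g_per.
- exact: le_trans g0 (g_mono _ _ f0).
Qed.

Lemma isLam_shift m n f (q : nat) : isLam m n f ->
  forall j, f (j + q%:Z * m.+1%:Z) = f j + q%:Z * n.+1%:Z.
Proof.
move=> [_ [f_per _]]; elim: q => [|q IH] j; first by rewrite !mul0r !addr0.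
have -> : j + q.+1%:Z * m.+1%:Z = j + q%:Z * m.+1%:Z + m.+1%:Z by lia.
by rewrite f_per IH; lia.
Qed.

Lemma isLam_ext m n f g : isLam m n f -> isLam m n g ->
  (forall j : int, 0 <= j -> j <= m%:Z -> f j = g j) -> f = g.
Proof.
move=> lam_f lam_g eq_fg; apply: FunctionalExtensionality.functional_extensionality => x.
have := divz_eq x m.+1%:Z; have := modz_bound x m.
move: (x %/ _)%Z (x %% _)%Z => q r r_range x_eq.
have eq_r : f r = g r by apply: eq_fg; lia.
case: q x_eq => q x_eq.
- by rewrite x_eq addrC (isLam_shift q lam_f) (isLam_shift q lam_g) eq_r.
- have := isLam_shift q.+1 lam_f x; have := isLam_shift q.+1 lam_g x.
  have -> : x + q.+1%:Z * m.+1%:Z = r by rewrite x_eq NegzE; lia.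
  rewrite eq_r; lia.
Qed.

Lemma eps_small n i x : 0 <= x < n%:Z -> eps n i x = if x < i%:Z then x else x + 1.
Proof. exact: (@periodic_ext_small n n.+1 (fun r => if r < i%:Z then r else r + 1)). Qed.

Lemma eps_next n i x : n%:Z <= x < n%:Z + n%:Z ->
  eps n i x = (if x - n%:Z < i%:Z then x - n%:Z else x - n%:Z + 1) + n.+1%:Z.
Proof. exact: (@periodic_ext_next n n.+1 (fun r => if r < i%:Z then r else r + 1)). Qed.

Lemma eta_small n i x : 0 <= x < n.+2%:Z -> eta n i x = if x <= i%:Z then x else x - 1.
Proof. exact: (@periodic_ext_small n.+2 n.+1 (fun r => if r <= i%:Z then r else r - 1)). Qed.

Lemma eta_next n i x : n.+2%:Z <= x < n.+2%:Z + n.+2%:Z ->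
  eta n i x = (if x - n.+2%:Z <= i%:Z then x - n.+2%:Z else x - n.+2%:Z - 1) + n.+1%:Z.
Proof. exact: (@periodic_ext_next n.+2 n.+1 (fun r => if r <= i%:Z then r else r - 1)). Qed.

(* Composites of eps and eta evaluated on one period never leave the first two
   periods, where all maps are explicit; the remaining case analysis is linear. *)
Ltac lam_compute := repeat match goal with
 | |- context [eps ?n ?i ?x] =>
     first [ rewrite (@eps_small n i x); last lia | rewrite (@eps_next n i x); last lia ]
 | |- context [eta ?n ?i ?x] =>
     first [ rewrite (@eta_small n i x); last lia | rewrite (@eta_next n i x); last lia ]
 | |- context [if ?c then _ else _] => case: ifPn => ?
 | |- context [eps ?n ?i ?x] => case: (ltP x n%:Z) => ?
 | |- context [eta ?n ?i ?x] => case: (ltP x n.+2%:Z) => ?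
 end; lia.

Lemma sum_simplicial_cancel (V : zmodType) N (a : nat -> nat -> V) :
  (forall i j, (i <= j < N)%N -> a i j.+1 = - a j i) ->
  \sum_(0 <= i < N) \sum_(0 <= j < N.+1) a i j = 0.
Proof.
move=> a_anti.
have split_inner i : (0 <= i < N)%N -> \sum_(0 <= j < N.+1) a i j =
    \sum_(0 <= j < N | (j < i.+1)%N) a i j - \sum_(0 <= j < N | (i <= j)%N) a j i.
  move=> /andP[_ lt_iN]; rewrite (big_cat_nat _ (n := i.+1)) //=; last lia.
  rewrite (big_nat_widen _ _ N) // big_add1 /= -sumrN; congr (_ + _).
  rewrite (big_nat_widenl _ 0) // big_mkcond [RHS]big_mkcond /=.
  by apply: eq_big_nat => j /andP[_ lt_jN]; case: leqP => // le_ij; rewrite a_anti ?le_ij.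
rewrite (eq_big_nat _ _ split_inner) sumrB.
by rewrite [X in _ - X](exchange_big_dep_nat xpredT) // subrr.
Qed.

Section SignTheory.
Variable V : zmodType.

Lemma sgnS k (x : V) : sgn k.+1 x = - sgn k x.
Proof. by rewrite /sgn /=; case: (odd k); rewrite ?opprK. Qed.

Lemma sgnD k (x y : V) : sgn k (x + y) = sgn k x + sgn k y.
Proof. by rewrite /sgn; case: (odd k); rewrite ?opprD. Qed.

Lemma sgnN k (x : V) : sgn k (- x) = - sgn k x.
Proof. by rewrite /sgn; case: (odd k). Qed.

Lemma sgnB k (x y : V) : sgn k (x - y) = sgn k x - sgn k y.
Proof. by rewrite sgnD sgnN. Qed.

Lemma sgn0 k : sgn k (0 : V) = 0.
Proof. by rewrite /sgn; case: (odd k); rewrite ?oppr0. Qed.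

Lemma sgnK k (x : V) : sgn k (sgn k x) = x.
Proof. by rewrite /sgn; case: (odd k); rewrite ?opprK. Qed.

Lemma sgn_addn a b (x : V) : sgn (a + b) x = sgn a (sgn b x).
Proof. by elim: a => [|a IH] //; rewrite addSn !sgnS IH. Qed.

Lemma sgnC a b (x : V) : sgn a (sgn b x) = sgn b (sgn a x).
Proof. by rewrite -!sgn_addn addnC. Qed.

Lemma sgn_sum I (r : seq I) (P : pred I) k (F : I -> V) :
  sgn k (\sum_(i <- r | P i) F i) = \sum_(i <- r | P i) sgn k (F i).
Proof. by apply: (big_morph (sgn k)) => [x y|]; rewrite ?sgnD ?sgn0. Qed.

End SignTheory.

Section PreAdditiveTheory.
Variable A : PreAdditive.

Lemma hcomp0l X Y Z (f : Hom A X Y) : hcomp (0 : Hom A Y Z) f = 0.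
Proof. by apply: (@addrI _ (hcomp 0 f)); rewrite -hcompDl !addr0. Qed.

Lemma hcomp0r X Y Z (g : Hom A Y Z) : hcomp g (0 : Hom A X Y) = 0.
Proof. by apply: (@addrI _ (hcomp g 0)); rewrite -hcompDr !addr0. Qed.

Lemma hcompNl X Y Z (g : Hom A Y Z) (f : Hom A X Y) : hcomp (- g) f = - hcomp g f.
Proof. by apply/eqP; rewrite -addr_eq0 -hcompDl addNr hcomp0l. Qed.

Lemma hcompNr X Y Z (g : Hom A Y Z) (f : Hom A X Y) : hcomp g (- f) = - hcomp g f.
Proof. by apply/eqP; rewrite -addr_eq0 -hcompDr addNr hcomp0r. Qed.

Lemma hcompBl X Y Z (g1 g2 : Hom A Y Z) (f : Hom A X Y) :
  hcomp (g1 - g2) f = hcomp g1 f - hcomp g2 f.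
Proof. by rewrite hcompDl hcompNl. Qed.

Lemma hcompBr X Y Z (g : Hom A Y Z) (f1 f2 : Hom A X Y) :
  hcomp g (f1 - f2) = hcomp g f1 - hcomp g f2.
Proof. by rewrite hcompDr hcompNr. Qed.

Lemma hcomp_suml X Y Z I (r : seq I) (P : pred I) (F : I -> Hom A Y Z) (f : Hom A X Y) :
  hcomp (\sum_(i <- r | P i) F i) f = \sum_(i <- r | P i) hcomp (F i) f.
Proof. by apply: (big_morph (hcomp^~ f)) => [g1 g2|]; rewrite ?hcompDl ?hcomp0l. Qed.

Lemma hcomp_sumr X Y Z I (r : seq I) (P : pred I) (g : Hom A Y Z) (F : I -> Hom A X Y) :
  hcomp g (\sum_(i <- r | P i) F i) = \sum_(i <- r | P i) hcomp g (F i).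
Proof. by apply: (big_morph (hcomp g)) => [f1 f2|]; rewrite ?hcompDr ?hcomp0r. Qed.

Lemma hcomp_sgnl X Y Z k (g : Hom A Y Z) (f : Hom A X Y) :
  hcomp (sgn k g) f = sgn k (hcomp g f).
Proof. by rewrite /sgn; case: (odd k); rewrite ?hcompNl. Qed.

Lemma hcomp_sgnr X Y Z k (g : Hom A Y Z) (f : Hom A X Y) :
  hcomp g (sgn k f) = sgn k (hcomp g f).
Proof. by rewrite /sgn; case: (odd k); rewrite ?hcompNr. Qed.

Lemma hpowSr X (f : Hom A X X) n : hpow f n.+1 = hcomp (hpow f n) f.
Proof.
elim: n => [|n IH] /=; first by rewrite hcomp1m hcompm1.
by rewrite -hcompA -IH.
Qed.

Lemma hpow_commute X (f g : Hom A X X) n :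
  hcomp f g = hcomp g f -> hcomp (hpow f n) g = hcomp g (hpow f n).
Proof.
move=> fg; elim: n => [|n IH] /=; first by rewrite hcomp1m hcompm1.
by rewrite -hcompA IH hcompA fg -hcompA.
Qed.

Lemma hpowM X (f g : Hom A X X) n :
  hcomp f g = hcomp g f -> hpow (hcomp f g) n = hcomp (hpow f n) (hpow g n).
Proof.
move=> fg; elim: n => [|n IH] /=; first by rewrite hcomp1m.
rewrite IH -hcompA [hcomp g (hcomp (hpow f n) _)]hcompA.
by rewrite -(hpow_commute n fg) -!hcompA hcompA.
Qed.

(* [K] factors both as [(1 - B)(1 - C)] and as [(1 - C)(1 - B)]. *)
Lemma hpow_orth_factor X (K B C : Hom A X X) n :
  K = idm X - B - C -> hcomp B C = 0 -> hcomp C B = 0 ->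
  hcomp (hpow K n) (idm X - B) = hcomp (hpow (idm X - B) n.+1) (hpow (idm X - C) n).
Proof.
move=> K_eq BC CB.
have K_BC : hcomp (idm X - B) (idm X - C) = K.
  by rewrite K_eq hcompBl !hcompBr BC !hcomp1m hcompm1 subr0 addrAC.
have K_CB : hcomp (idm X - C) (idm X - B) = K.
  by rewrite K_eq hcompBl !hcompBr CB !hcomp1m hcompm1 subr0.
have commBC : hcomp (idm X - B) (idm X - C) = hcomp (idm X - C) (idm X - B).
  by rewrite K_BC K_CB.
by rewrite -K_BC hpowM // -hcompA (hpow_commute n (esym commBC)) hcompA -hpowSr.
Qed.

End PreAdditiveTheory.

Section DuplicialTheory.
Variables (A : PreAdditive) (M : Duplicial A).

Local Hint Resolve eps_isLam eta_isLam : core.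

Lemma Mmor_comp_eq m n n' p f g f' g' :
  isLam m n f -> isLam n p g -> isLam m n' f' -> isLam n' p g' ->
  (forall j : int, 0 <= j -> j <= m%:Z -> g (f j) = g' (f' j)) ->
  hcomp (Mmor M m n f) (Mmor M n p g) = hcomp (Mmor M m n' f') (Mmor M n' p g').
Proof.
move=> lam_f lam_g lam_f' lam_g' eq_on_period; rewrite -!Mmor_comp //.
by congr (Mmor M m p _); apply: (isLam_ext (isLam_comp lam_f lam_g) (isLam_comp lam_f' lam_g')).
Qed.

Lemma Mmor_comp_id m n f g : isLam m n f -> isLam n m g ->
  (forall j : int, 0 <= j -> j <= m%:Z -> g (f j) = j) ->
  hcomp (Mmor M m n f) (Mmor M n m g) = idm (Mob M m).
Proof.
move=> lam_f lam_g gf_id; rewrite -Mmor_comp // -(Mmor_id M m); congr (Mmor M m m _).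
apply: (isLam_ext (isLam_comp lam_f lam_g)) => [|j j_ge0 j_le]; last exact: gf_id.
by split; [|split].
Qed.

Lemma del_sdeg_diag n i : (i <= n.+1)%N -> hcomp (del M n i) (sdeg M n i) = idm (Mob M n).
Proof. by move=> le_in; apply: Mmor_comp_id => // x x_ge0 x_le; lam_compute. Qed.

Lemma del_sdeg_succ n i : (i <= n)%N -> hcomp (del M n i.+1) (sdeg M n i) = idm (Mob M n).
Proof. by move=> le_in; apply: Mmor_comp_id => // x x_ge0 x_le; lam_compute. Qed.

(* For [i = k + 2] both degeneracies are the extra ones [s_{n,n+1}], which do
   not commute with [∂_0]; this defect is what [kappa] measures. *)
Lemma del_sdeg_lt k i j : (j < i <= k.+2)%N -> (0 < j)%N || (i <= k.+1)%N ->
  hcomp (del M k.+1 j) (sdeg M k.+1 i) = hcomp (sdeg M k i.-1) (del M k j).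
Proof.
move=> /andP[lt_ji le_ik] j_range; apply: Mmor_comp_eq => // x x_ge0 x_le.
by case: i lt_ji le_ik j_range => [|i] //= lt_ji le_ik /orP[] ?; lam_compute.
Qed.

Lemma del_sdeg_gt k i j : (i.+1 < j <= k.+2)%N ->
  hcomp (del M k.+1 j) (sdeg M k.+1 i) = hcomp (sdeg M k i) (del M k j.-1).
Proof.
move=> /andP[lt_ij le_jk]; apply: Mmor_comp_eq => // x x_ge0 x_le.
by case: j lt_ij le_jk => [|j] //= lt_ij le_jk; lam_compute.
Qed.

Lemma del_del k i j : (i < j <= k.+2)%N ->
  hcomp (del M k i) (del M k.+1 j) = hcomp (del M k j.-1) (del M k.+1 i).
Proof.
move=> /andP[lt_ij le_jk]; apply: Mmor_comp_eq => // x x_ge0 x_le.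
by case: j lt_ij le_jk => [|j] //= lt_ij le_jk; lam_compute.
Qed.

Lemma sdeg_sdeg n i j : (i <= j <= n.+1)%N ->
  hcomp (sdeg M n.+1 i) (sdeg M n j) = hcomp (sdeg M n.+1 j.+1) (sdeg M n i).
Proof.
by move=> /andP[le_ij le_jn]; apply: Mmor_comp_eq => // x x_ge0 x_le; lam_compute.
Qed.

Lemma kappaS k : kappa M k.+1 =
  sgn k.+1 (hcomp (del M k.+1 0) (sdeg M k.+1 k.+2) - hcomp (sdeg M k k.+1) (del M k 0)).
Proof. by []. Qed.

Lemma kappa0 : kappa M 0 = hcomp (del M 0 0) (sdeg M 0 1).
Proof. by rewrite /kappa /= subr0. Qed.

Lemma del_kappa k i : (0 < i <= k.+1)%N ->
  hcomp (del M k.+1 i) (kappa M k.+2) = - hcomp (kappa M k.+1) (del M k.+1 i.+1).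
Proof.
move=> /andP[i_gt0 le_ik].
have first_term : hcomp (del M k.+1 i) (hcomp (del M k.+2 0) (sdeg M k.+2 k.+3)) =
    hcomp (hcomp (del M k.+1 0) (sdeg M k.+1 k.+2)) (del M k.+1 i.+1).
  rewrite hcompA -(@del_del k.+1 0 i.+1 ltac:(lia)) -hcompA.
  by rewrite (@del_sdeg_lt k.+1 k.+3 i.+1 ltac:(lia) ltac:(lia)) hcompA.
have second_term : hcomp (del M k.+1 i) (hcomp (sdeg M k.+1 k.+2) (del M k.+1 0)) =
    hcomp (hcomp (sdeg M k k.+1) (del M k 0)) (del M k.+1 i.+1).
  rewrite hcompA (@del_sdeg_lt k k.+2 i ltac:(lia) ltac:(lia)).
  by rewrite -hcompA -(@del_del k 0 i.+1 ltac:(lia)) hcompA.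
by rewrite !kappaS hcomp_sgnr hcompBr first_term second_term hcomp_sgnl hcompBl sgnS.
Qed.

Lemma del0_kappa n :
  hcomp (del M n 0) (kappa M n.+1) = hcomp (kappa M n) (del M n 0 - del M n 1).
Proof.
have first_term : hcomp (del M n 0) (hcomp (del M n.+1 0) (sdeg M n.+1 n.+2)) =
    hcomp (hcomp (del M n 0) (sdeg M n n.+1)) (del M n 1).
  rewrite hcompA -(@del_del n 0 1 ltac:(lia)) -hcompA.
  by rewrite (@del_sdeg_lt n n.+2 1 ltac:(lia) ltac:(lia)) hcompA.
rewrite kappaS hcomp_sgnr hcompBr first_term hcompA.
case: n first_term => [|k] _; first by rewrite kappa0 hcompBr /sgn /= opprB.
have del01 : hcomp (hcomp (sdeg M k k.+1) (del M k 0)) (del M k.+1 1) =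
    hcomp (hcomp (sdeg M k k.+1) (del M k 0)) (del M k.+1 0).
  by rewrite -!hcompA (@del_del k 0 1 ltac:(lia)).
by rewrite kappaS !hcomp_sgnl !hcompBr !hcompBl del01 sgnS -sgnN !opprB addrA subrK.
Qed.

Definition face_sum n k := \sum_(0 <= i < k.+1) sgn i (del M n i).

Lemma face_sum0 n : face_sum n 0 = del M n 0.
Proof. by rewrite /face_sum big_nat1. Qed.

Lemma face_sumS n k : face_sum n k.+1 = face_sum n k + sgn k.+1 (del M n k.+1).
Proof. by rewrite /face_sum big_nat_recr. Qed.

Lemma face_sum_kappa n k : (k <= n)%N ->
  hcomp (face_sum n k) (kappa M n.+1) = hcomp (kappa M n) (face_sum n k.+1).
Proof.
elim: k => [|k IH] le_kn; first by rewrite face_sum0 del0_kappa face_sumS face_sum0.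
rewrite face_sumS hcompDl IH ?(ltnW le_kn) // hcomp_sgnl.
clear IH; case: n le_kn => [|n] // le_kn.
rewrite del_kappa // sgnN -sgnS -hcomp_sgnr -hcompDr.
by rewrite [face_sum n.+1 k.+2]face_sumS.
Qed.

Lemma del0_kappa_pow n k : (k <= n.+1)%N ->
  hcomp (del M n 0) (hpow (kappa M n.+1) k) = hcomp (hpow (kappa M n) k) (face_sum n k).
Proof.
elim: k => [|k IH] le_kn; first by rewrite hcompm1 hcomp1m face_sum0.
by rewrite !hpowSr hcompA IH ?(ltnW le_kn) // -hcompA face_sum_kappa // hcompA.
Qed.

Lemma kappa_sdeg0 k : hcomp (kappa M k.+1) (sdeg M k 0) = 0.
Proof.
rewrite kappaS hcomp_sgnl hcompBl -!hcompA.
rewrite -(@sdeg_sdeg k 0 k.+1 ltac:(lia)) hcompA del_sdeg_diag // hcomp1m.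
by rewrite del_sdeg_diag // hcompm1 subrr sgn0.
Qed.

Lemma kappa_sdeg k i : (0 < i <= k.+1)%N ->
  hcomp (kappa M k.+2) (sdeg M k.+1 i) = - hcomp (sdeg M k.+1 i.-1) (kappa M k.+1).
Proof.
move=> /andP[i_gt0 le_ik].
have first_term : hcomp (hcomp (del M k.+2 0) (sdeg M k.+2 k.+3)) (sdeg M k.+1 i) =
    hcomp (sdeg M k.+1 i.-1) (hcomp (del M k.+1 0) (sdeg M k.+1 k.+2)).
  rewrite -hcompA -(@sdeg_sdeg k.+1 i k.+2 ltac:(lia)) hcompA.
  by rewrite (@del_sdeg_lt k.+1 i 0 ltac:(lia) ltac:(lia)) -hcompA.
have second_term : hcomp (hcomp (sdeg M k.+1 k.+2) (del M k.+1 0)) (sdeg M k.+1 i) =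
    hcomp (sdeg M k.+1 i.-1) (hcomp (sdeg M k k.+1) (del M k 0)).
  rewrite -hcompA (@del_sdeg_lt k i 0 ltac:(lia) ltac:(lia)) hcompA.
  by rewrite -(@sdeg_sdeg k i.-1 k.+1 ltac:(lia)) -hcompA.
by rewrite !kappaS hcomp_sgnl hcompBl first_term second_term hcomp_sgnr hcompBr sgnS.
Qed.

Lemma kappa_pow_sdeg k i j : (i <= k)%N -> (i < j)%N ->
  hcomp (hpow (kappa M k.+1) j) (sdeg M k i) = 0.
Proof.
elim: i k j => [|i IH] k [|j] // le_ik lt_ij.
  by rewrite hpowSr -hcompA kappa_sdeg0 hcomp0r.
case: k le_ik => [|k] // le_ik.
by rewrite hpowSr -hcompA kappa_sdeg // hcompNr hcompA /= IH ?hcomp0l ?oppr0 // ltnW.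
Qed.

Definition degen_sum n := \sum_(0 <= i < n.+1) sgn i (sdeg M n i).

Lemma bb_nat n : bb M n = \sum_(0 <= i < n.+2) sgn i (del M n i).
Proof. by rewrite /bb big_mkord. Qed.

Lemma dd_nat n : dd M n = \sum_(0 <= i < n.+2) sgn i (sdeg M n i).
Proof. by rewrite /dd big_mkord. Qed.

Lemma bb_face_sum n : bb M n = face_sum n n + sgn n.+1 (del M n n.+1).
Proof. by rewrite bb_nat big_nat_recr. Qed.

Lemma dd_degen_sum n : dd M n = degen_sum n + sgn n.+1 (sdeg M n n.+1).
Proof. by rewrite dd_nat big_nat_recr. Qed.

Lemma bb_sdeg k i : (i <= k.+1)%N ->
  hcomp (bb M k.+1) (sdeg M k.+1 i) =
  hcomp (sdeg M k i.-1) (\sum_(0 <= j < i) sgn j (del M k j)) -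
  hcomp (sdeg M k i) (\sum_(i.+1 <= j < k.+2) sgn j (del M k j)).
Proof.
move=> le_ik.
rewrite bb_nat hcomp_suml (@big_cat_nat _ _ _ i 0 k.+3) //=; last by lia.
rewrite (@big_cat_nat _ _ _ i.+2 i k.+3) //=; last by lia.
rewrite big_nat_recl // big_nat1 !hcomp_sgnl (del_sdeg_diag (leqW le_ik)) (del_sdeg_succ le_ik).
rewrite sgnS subrr add0r; congr (_ + _).
  rewrite hcomp_sumr; apply: eq_big_nat => j /andP[_ lt_ji].
  by rewrite hcomp_sgnl hcomp_sgnr (@del_sdeg_lt k i j ltac:(lia) ltac:(lia)).
rewrite hcomp_sumr -sumrN big_add1 /=; apply: eq_big_nat => j /andP[le_ij lt_jk].
by rewrite hcomp_sgnl hcomp_sgnr (@del_sdeg_gt k i j.+1 ltac:(lia)) sgnS.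
Qed.

Lemma bb_degen_sum k :
  hcomp (bb M k.+1) (degen_sum k.+1) = - hcomp (degen_sum k) (bb M k).
Proof.
rewrite /degen_sum hcomp_sumr (eq_big_nat _ _ (F2 := fun i =>
   sgn i (hcomp (sdeg M k i.-1) (\sum_(0 <= j < i) sgn j (del M k j))) -
   sgn i (hcomp (sdeg M k i) (\sum_(i.+1 <= j < k.+2) sgn j (del M k j))))); last first.
  by move=> i /andP[_ lt_ik]; rewrite hcomp_sgnr bb_sdeg // sgnB.
rewrite sumrB big_nat_recl // (@big_geq _ _ _ 0 0) // hcomp0r sgn0 add0r.
rewrite [X in _ - X]big_nat_recr //= (@big_geq _ _ _ k.+2 k.+2) // hcomp0r sgn0 addr0.
rewrite -sumrB hcomp_suml -sumrN; apply: eq_big_nat => i /andP[_ lt_ik].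
rewrite /= sgnS -opprD -sgnD -hcompDr hcomp_sgnl.
by rewrite bb_nat (@big_cat_nat _ _ _ i.+1 0 k.+2) // ltnW.
Qed.

Lemma bb_degen_sum0 : hcomp (bb M 0) (degen_sum 0) = 0.
Proof.
rewrite /degen_sum big_nat1 bb_nat big_nat_recr // big_nat1 /= hcomp_sgnr hcompDl.
by rewrite !hcomp_sgnl del_sdeg_diag // del_sdeg_succ // /sgn /= subrr.
Qed.

Lemma bb_sdeg_last k :
  hcomp (bb M k.+1) (sdeg M k.+1 k.+2) =
  hcomp (del M k.+1 0) (sdeg M k.+1 k.+2) + hcomp (sdeg M k k.+1) (bb M k - del M k 0) +
  sgn k.+2 (idm (Mob M k.+1)).
Proof.
have -> : bb M k - del M k 0 = \sum_(0 <= j < k.+1) sgn j.+1 (del M k j.+1).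
  by rewrite bb_nat big_nat_recl // addrC addKr.
rewrite bb_nat hcomp_suml big_nat_recl // big_nat_recr //= !hcomp_sgnl.
rewrite del_sdeg_diag // addrA hcomp_sumr.
congr (_ + _ + _); apply: eq_big_nat => j /andP[_ lt_jk].
by rewrite hcomp_sgnl hcomp_sgnr (@del_sdeg_lt k k.+2 j.+1 ltac:(lia) ltac:(lia)).
Qed.

Lemma kappa_bd_db n : kappa M n = idm _ - bd M n - db M n.
Proof.
case: n => [|k].
  rewrite /bd /db subr0 dd_degen_sum hcompDr bb_degen_sum0 add0r hcomp_sgnr.
  rewrite bb_nat big_nat_recr // big_nat1 hcompDl !hcomp_sgnl del_sdeg_diag // kappa0.
  by rewrite /sgn /= opprK addrCA subrr addr0.
rewrite /bd /db /= !dd_degen_sum hcompDr hcompDl bb_degen_sum hcomp_sgnr hcomp_sgnl bb_sdeg_last.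
rewrite kappaS hcompBr [sgn k.+2 _]sgnS [sgn k.+2 _]sgnS !sgnD !sgnN sgnK.
rewrite !opprD !opprK !addrA [RHS](ACl ((3*5)*((1*6)*(2*7)*(4*8)))).
by rewrite /= !subrr !addr0.
Qed.

Lemma bb_bb k : hcomp (bb M k) (bb M k.+1) = 0.
Proof.
rewrite !bb_nat hcomp_suml (eq_big_nat _ _ (F2 := fun i => \sum_(0 <= j < k.+3)
    sgn i (sgn j (hcomp (del M k i) (del M k.+1 j))))); last first.
  move=> i _; rewrite hcomp_sgnl hcomp_sumr sgn_sum.
  by apply: eq_bigr => j _; rewrite hcomp_sgnr.
apply: sum_simplicial_cancel => i j /andP[le_ij lt_jk].
by rewrite (@del_del k i j.+1 ltac:(lia)) /= sgnS sgnN sgnC.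
Qed.

Lemma dd_dd k : hcomp (dd M k.+1) (dd M k) = 0.
Proof.
rewrite !dd_nat hcomp_suml (eq_big_nat _ _ (F2 := fun i => \sum_(0 <= j < k.+2)
    sgn i (sgn j (hcomp (sdeg M k.+1 i) (sdeg M k j))))); last first.
  move=> i _; rewrite hcomp_sgnl hcomp_sumr sgn_sum.
  by apply: eq_bigr => j _; rewrite hcomp_sgnr.
rewrite exchange_big_nat; apply: sum_simplicial_cancel => j i /andP[le_ji lt_ik].
by rewrite -(@sdeg_sdeg k j i ltac:(lia)) sgnS sgnC.
Qed.

Lemma bd_db n : hcomp (bd M n) (db M n) = 0.
Proof.
case: n => [|k]; first by rewrite /db hcomp0r.
by rewrite /bd /db -!hcompA [hcomp (dd M k.+1) _]hcompA dd_dd hcomp0l hcomp0r.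
Qed.

Lemma db_bd n : hcomp (db M n) (bd M n) = 0.
Proof.
case: n => [|k]; first by rewrite /db hcomp0l.
by rewrite /bd /db -!hcompA [hcomp (bb M k) _]hcompA bb_bb hcomp0l hcomp0r.
Qed.

Lemma kappa_pow_bb_degen_sum n :
  hcomp (hpow (kappa M n) n) (hcomp (bb M n) (degen_sum n)) = 0.
Proof.
case: n => [|k]; first by rewrite bb_degen_sum0 hcomp0r.
rewrite bb_degen_sum hcompNr hcompA /degen_sum hcomp_sumr big_nat big1 ?hcomp0l ?oppr0 //.
by move=> i /andP[_ lt_ik]; rewrite hcomp_sgnr kappa_pow_sdeg ?sgn0.
Qed.

Lemma piDK_kappa n : piDK M n = hcomp (hpow (kappa M n) n) (idm _ - bd M n).
Proof.
rewrite /piDK hcompA del0_kappa_pow // -hcompA -hcomp_sgnr.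
suff -> : sgn n (hcomp (face_sum n n) (sdeg M n n.+1)) =
    idm _ - bd M n + hcomp (bb M n) (degen_sum n).
  by rewrite hcompDr kappa_pow_bb_degen_sum addr0.
have bb_sdeg_extra : hcomp (bb M n) (sdeg M n n.+1) =
    hcomp (face_sum n n) (sdeg M n n.+1) + sgn n.+1 (idm _).
  by rewrite bb_face_sum hcompDl hcomp_sgnl del_sdeg_diag.
rewrite /bd dd_degen_sum hcompDr hcomp_sgnr bb_sdeg_extra sgnD sgnK sgnS.
rewrite !opprD !opprK !addrA [RHS](ACl (3*((1*4)*(2*5)))).
by rewrite /= subrr addNr !addr0.
Qed.

End DuplicialTheory.

Theorem mainTheorem15 (A : PreAdditive) (M : Duplicial A) (n : nat) :
  piDK M n =
  hcomp (hpow (idm (Mob M n) - bd M n) n.+1) (hpow (idm (Mob M n) - db M n) n).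
Proof.
rewrite piDK_kappa; apply: hpow_orth_factor.
- exact: kappa_bd_db.
- exact: bd_db.
- exact: db_bd.
Qed.
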